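(* For the fractional scheduling problem without payments of a single task on $n$ machines, the proportional mechanism has approximation ratio $1$. When the proportional mechanism is run independently for each of $m$ tasks, its approximation ratio (for the fractional makespan) is at least $m$.
   Context: Fractional scheduling without payments: $n$ machines, $m$ divisible tasks; machine $i$ has private true times $t_{i,j}>0$ and declares $\hat t_{i,j}>0$. A mechanism outputs fractions $\alpha_{i,j}\in[0,1]$ with $\sum_i\alpha_{i,j}=1$ for each task $j$. Machines are bound by their declarations: machine $i$'s cost is $C_i=\sum_j\alpha_{i,j}\max\{\hat t_{i,j},t_{i,j}\}$ and the fractional makespan is $\max_iC_i$. The proportional mechanism for a single task with declarations $\hat t_1,\dots,\hat t_n$ gives machine $i$ the fraction $\alpha_i=\hat t_i^{-1}/\sum_{k=1}^n\hat t_k^{-1}$; for $m$ tasks it does this separately for each task $j$ using the declarations $\hat t_{1,j},\dots,\hat t_{n,j}$. (This mechanism is truthful.) The approximation ratio is the supremum over true instances $\mathbf t$ of the fractional makespan under truthful reports $\hat{\mathbf t}=\mathbf t$ divided by the optimal fractional makespan $\min_\alpha\max_i\sum_j\alpha_{i,j}t_{i,j}$. *)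

From HB Require Import structures.
From mathcomp Require Import all_boot all_order all_algebra.
From mathcomp Require Import all_classical all_reals ereal.
Set Implicit Arguments. Unset Strict Implicit. Unset Printing Implicit Defensive.
Import Order.TTheory GRing.Theory Num.Theory.
Local Open Scope ring_scope.
Local Open Scope classical_set_scope.

(* Fractional scheduling: n machines ('I_n), m divisible tasks ('I_m).
   A (true or declared) instance is a matrix of processing times t i j. *)
Definition instance (R : realType) (n m : nat) := 'I_n -> 'I_m -> R.

Definition pos_instance (R : realType) (n m : nat) (t : instance R n m) : Prop :=
  forall i j, 0 < t i j.

Definition feasible (R : realType) (n m : nat) (a : 'I_n -> 'I_m -> R) : Prop :=
  (forall i j, 0 <= a i j <= 1) /\ (forall j, \sum_(i < n) a i j = 1).

(* cost of machine i, bound by its declarations th, with true times t *)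
Definition cost (R : realType) (n m : nat) (th t : instance R n m)
    (a : 'I_n -> 'I_m -> R) (i : 'I_n) : R :=
  \sum_(j < m) a i j * Num.max (th i j) (t i j).

Definition makespan (R : realType) (n m : nat) (th t : instance R n m)
    (a : 'I_n -> 'I_m -> R) : R :=
  \big[Num.max/0]_(i < n) cost th t a i.

(* optimal fractional makespan: min over feasible allocations of
   max_i sum_j a i j * t i j (the minimum is attained; we write it as inf) *)
Definition opt (R : realType) (n m : nat) (t : instance R n m) : R :=
  inf [set makespan t t a | a in [set a | feasible a]].

Definition proportional (R : realType) (n m : nat) (th : instance R n m)
    : 'I_n -> 'I_m -> R :=
  fun i j => (th i j)^-1 / \sum_(k < n) (th k j)^-1.

Definition prop_ratio (R : realType) (n m : nat) (t : instance R n m) : R :=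
  makespan t t (proportional t) / opt t.

Definition prop_approx_ratio (R : realType) (n m : nat) : \bar R :=
  ereal_sup [set (prop_ratio t)%:E | t in [set t : instance R n m | pos_instance t]].

(** Under truthful reports the proportional mechanism gives machine i the
    fraction s_ij / S_j of task j, where s_ij = 1/t_ij and S_j = sum_i s_ij;
    every machine then has cost sum_j 1/S_j.  Conversely, any allocation has
    makespan at least 1/S_j for each j, since machine i gets at most
    (makespan) * s_ij of task j and these fractions sum to 1.  For one task
    the two bounds coincide, so the ratio is 1.  With m tasks, the instance
    with times 1 on a diagonal and K elsewhere has an allocation of makespan
    1, while S_j <= 1 + n/K makes the proportional makespan at least
    m (1 - n/K); letting K grow gives the lower bound m. *)

From mathcomp Require Import all_boot all_order all_algebra.
From mathcomp Require Import all_classical all_reals ereal.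
From mathcomp Require Import ring lra.
Import Order.TTheory GRing.Theory Num.Theory.
Set Implicit Arguments. Unset Strict Implicit.
Local Open Scope ring_scope.

Section ProportionalMechanism.
Variables (R : realType) (n m : nat).
Implicit Types (t th : instance R n m) (a : 'I_n -> 'I_m -> R).

Definition speed t (j : 'I_m) : R := \sum_(k < n) (t k j)^-1.

Lemma inv_le_speed t i j : pos_instance t -> (t i j)^-1 <= speed t j.
Proof.
move=> tpos; rewrite /speed (bigD1 i) //= lerDl.
by apply: sumr_ge0 => k _; rewrite invr_ge0 ltW.
Qed.

Lemma speed_gt0 t (i : 'I_n) j : pos_instance t -> 0 < speed t j.
Proof.
by move=> tpos; apply: lt_le_trans (inv_le_speed i j tpos); rewrite invr_gt0.
Qed.

Lemma makespan_ge0 th t a : 0 <= makespan th t a.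
Proof. by rewrite /makespan; elim/big_rec: _ => // i x _; rewrite le_max orbC => ->. Qed.

Lemma cost_le_makespan th t a i : cost th t a i <= makespan th t a.
Proof. exact: (le_bigmax 0 (cost th t a) i). Qed.

Lemma feasible_makespan_ge t a j :
  pos_instance t -> feasible a -> (speed t j)^-1 <= makespan t t a.
Proof.
move=> tpos [a01 a_sum].
have [i0 _] : exists i : 'I_n, true.
  case: n a a_sum a01 => [|n'] a a_sum _; last by exists ord0.
  by have := a_sum j; rewrite big_ord0 => /esym/eqP; rewrite oner_eq0.
set M := makespan t t a.
have share_le i : a i j <= M * (t i j)^-1.
  rewrite -(ler_pM2r (tpos i j)) -mulrA mulVf ?gt_eqF // mulr1.
  apply: le_trans (cost_le_makespan t t a i).
  rewrite /cost (bigD1 j) //= maxxx lerDl; apply: sumr_ge0 => k _.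
  by rewrite maxxx; apply: mulr_ge0; [case/andP: (a01 i k) | apply: ltW].
have M_speed : 1 <= M * speed t j.
  by rewrite -(a_sum j) /speed mulr_sumr; apply: ler_sum => i _; apply: share_le.
by rewrite -(ler_pM2r (speed_gt0 i0 j tpos)) mulVf ?gt_eqF ?(speed_gt0 i0).
Qed.

Lemma proportional_feasible t :
  (0 < n)%N -> pos_instance t -> feasible (proportional t).
Proof.
move=> n_gt0 tpos; have i0 : 'I_n := Ordinal n_gt0.
split=> [i j|j]; rewrite /proportional.
  apply/andP; split; first by rewrite divr_ge0 ?invr_ge0 ?ltW ?(speed_gt0 i0).
  by rewrite ler_pdivrMr ?mul1r ?(speed_gt0 i0) ?inv_le_speed.
by rewrite -mulr_suml mulfV ?gt_eqF ?(speed_gt0 i0).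
Qed.

Lemma cost_proportional t i :
  pos_instance t -> cost t t (proportional t) i = \sum_(j < m) (speed t j)^-1.
Proof.
move=> tpos; apply: eq_bigr => j _.
by rewrite maxxx /proportional mulrC mulrA divff ?mul1r ?gt_eqF.
Qed.

Lemma makespan_proportional t :
  (0 < n)%N -> pos_instance t ->
  makespan t t (proportional t) = \sum_(j < m) (speed t j)^-1.
Proof.
move=> n_gt0 tpos; have i0 : 'I_n := Ordinal n_gt0.
apply/le_anti/andP; split; last by rewrite -(cost_proportional i0 tpos) cost_le_makespan.
apply: bigmax_le => [|i _]; last by rewrite cost_proportional.
by apply: sumr_ge0 => j _; rewrite invr_ge0 ltW ?(speed_gt0 i0).
Qed.

Lemma opt_le_makespan t a : feasible a -> opt t <= makespan t t a.
Proof.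
move=> a_feas; apply: ge_inf; last by exists a.
by exists 0 => _ [b _ <-]; apply: makespan_ge0.
Qed.

Lemma opt_ge_inv_speed t j :
  (0 < n)%N -> pos_instance t -> (speed t j)^-1 <= opt t.
Proof.
move=> n_gt0 tpos; apply: lb_le_inf.
  exists (makespan t t (proportional t)), (proportional t) => //.
  exact: proportional_feasible.
by move=> _ [a a_feas <-]; apply: feasible_makespan_ge.
Qed.

Lemma opt_gt0 t : (0 < n)%N -> (0 < m)%N -> pos_instance t -> 0 < opt t.
Proof.
move=> n_gt0 m_gt0 tpos; have j0 : 'I_m := Ordinal m_gt0.
apply: lt_le_trans (opt_ge_inv_speed j0 n_gt0 tpos).
by rewrite invr_gt0 (speed_gt0 (Ordinal n_gt0)).
Qed.

End ProportionalMechanism.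

Lemma prop_ratio_single_task (R : realType) n (t : instance R n 1) :
  (0 < n)%N -> pos_instance t -> prop_ratio t = 1.
Proof.
move=> n_gt0 tpos; rewrite /prop_ratio makespan_proportional // big_ord1.
have -> : opt t = (speed t ord0)^-1.
  apply/le_anti; rewrite opt_ge_inv_speed // andbT.
  apply: le_trans (opt_le_makespan t (proportional_feasible n_gt0 tpos)) _.
  by rewrite makespan_proportional // big_ord1.
by rewrite divff // invr_eq0 gt_eqF // (speed_gt0 (Ordinal n_gt0)).
Qed.

(* The tangent line of [x^-1] at [x = 1]. *)
Lemma inv_ge_2_sub (R : realFieldType) (x : R) : 0 < x -> 2 - x <= x^-1.
Proof.
move=> x_gt0; rewrite -(ler_pM2r x_gt0) mulVf ?gt_eqF //.
have := sqr_ge0 (x - 1); nra.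
Qed.

Section DiagonalInstance.
Variables (R : realType) (n m : nat) (K : R).
Hypotheses (le_mn : (m <= n)%N) (K_gt0 : 0 < K).

Definition diag_instance : instance R n m :=
  fun i j => if val i == val j then 1 else K.

Definition diag_alloc : 'I_n -> 'I_m -> R :=
  fun i j => if val i == val j then 1 else 0.

Lemma diag_instance_pos : pos_instance diag_instance.
Proof. by move=> i j; rewrite /diag_instance; case: ifP. Qed.

Lemma sum_diag_alloc j : \sum_(i < n) diag_alloc i j = 1.
Proof.
rewrite (bigD1 (widen_ord le_mn j)) //= /diag_alloc eqxx big1 ?addr0 // => i.
by rewrite -val_eqE /=; case: eqP.
Qed.

Lemma diag_alloc_feasible : feasible diag_alloc.
Proof.
split; last exact: sum_diag_alloc.
by move=> i j; rewrite /diag_alloc; case: ifP; rewrite ?lexx ?ler01.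
Qed.

Lemma makespan_diag_alloc : makespan diag_instance diag_instance diag_alloc <= 1.
Proof.
apply: bigmax_le => // i _; rewrite /cost.
have weight_eq j : diag_alloc i j * Num.max (diag_instance i j) (diag_instance i j)
    = diag_alloc i j.
  by rewrite maxxx /diag_alloc /diag_instance; case: ifP; rewrite ?mulr1 ?mul0r.
under eq_bigr => j _ do rewrite weight_eq.
case: (ltnP i m) => [i_lt_m|m_le_i]; last first.
  by rewrite big1 // => j _; rewrite /diag_alloc gtn_eqF // (leq_trans (ltn_ord j)).
rewrite (bigD1 (Ordinal i_lt_m)) //= /diag_alloc eqxx big1 ?addr0 // => j.
by rewrite -val_eqE /= eq_sym; case: eqP.
Qed.

Lemma speed_diag_instance_le j : speed diag_instance j <= 1 + n%:R / K.
Proof.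
rewrite mulr_natl -[n in _ *+ n]card_ord -sumr_const -(sum_diag_alloc j) -big_split.
apply: ler_sum => i _; rewrite /diag_instance /diag_alloc /=.
by case: ifP => _; rewrite ?invr1 ?add0r // lerDl invr_ge0 ltW.
Qed.

Lemma prop_ratio_diag_instance_ge :
  (0 < m)%N -> m%:R * (1 - n%:R / K) <= prop_ratio diag_instance.
Proof.
move=> m_gt0; have n_gt0 := leq_trans m_gt0 le_mn; have i0 : 'I_n := Ordinal n_gt0.
have tpos := diag_instance_pos.
have makespan_ge : m%:R * (1 - n%:R / K) <= makespan diag_instance diag_instance
    (proportional diag_instance).
  rewrite makespan_proportional // mulr_natl -[m in _ *+ m]card_ord -sumr_const.
  apply: ler_sum => j _; apply: le_trans (inv_ge_2_sub (speed_gt0 i0 j tpos)).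
  by have := speed_diag_instance_le j; lra.
apply: le_trans makespan_ge _.
rewrite ler_pdivlMr ?opt_gt0 // ler_piMr ?makespan_ge0 //.
exact: le_trans (opt_le_makespan _ diag_alloc_feasible) makespan_diag_alloc.
Qed.

End DiagonalInstance.

Theorem theorem7 (R : realType) :
  (forall n : nat, (0 < n)%N -> prop_approx_ratio R n 1 = 1%:E) /\
  (forall n m : nat, (0 < m)%N -> (m <= n)%N ->
     ((m%:R : R)%:E <= prop_approx_ratio R n m)%E).
Proof.
split=> [n n_gt0|n m m_gt0 le_mn].
  apply/le_anti/andP; split.
    by apply: ge_ereal_sup => _ [t tpos <-]; rewrite prop_ratio_single_task.
  apply: ereal_sup_ubound; exists (fun _ _ => 1); first by move=> i j; rewrite ltr01.
  by rewrite prop_ratio_single_task // => i j; rewrite ltr01.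
apply/lee_subgt0Pr => e e_gt0.
have n_gt0 := leq_trans m_gt0 le_mn.
pose K := m%:R * n%:R / e.
have K_gt0 : 0 < K by rewrite !mulr_gt0 ?invr_gt0 ?ltr0n.
apply: le_trans (ereal_sup_ubound _); last first.
  by exists (@diag_instance R n m K); first exact: diag_instance_pos.
rewrite -EFinB lee_fin; apply: le_trans (prop_ratio_diag_instance_ge le_mn K_gt0 m_gt0).
rewrite /K mulrBr mulr1 [X in _ <= _ - X](_ : _ = e) //.
by field; rewrite gt_eqF // !pnatr_eq0 -!lt0n n_gt0.
Qed.
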